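(* Let $N$ be a finite nonempty set, $p\notin N$ and $N'=N\cup\{p\}$. Let $\mathscr{C}=\{S_1,\dots,S_k\}$ be a minimal balanced collection on $N$ with (unique) balancing weights $(\lambda_{S_i})_{i\in[k]}$, where $[k]=\{1,\dots,k\}$. Let $I\subseteq[k]$ satisfy $\lambda_I:=\sum_{i\in I}\lambda_{S_i}=1$. Then $$\mathscr{C}'=\{S_i\cup\{p\}\mid i\in I\}\cup\{S_i\mid i\in[k]\setminus I\}$$ is a minimal balanced collection on $N'$.
   Context: For $T\subseteq N$, $\mathbf{1}^T\in\mathbb{R}^N$ denotes the characteristic vector of $T$ ($\mathbf{1}^T_i=1$ if $i\in T$, $0$ otherwise). A collection $\mathscr{B}$ of nonempty subsets of a finite set $N$ is balanced if there exist positive weights $(\lambda_S)_{S\in\mathscr{B}}$ (balancing weights) with $\sum_{S\in\mathscr{B}}\lambda_S\mathbf{1}^S=\mathbf{1}^N$. A balanced collection is minimal if it contains no balanced proper subcollection; equivalently, its system of balancing weights is unique. *)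

From HB Require Import structures.
From mathcomp Require Import all_boot all_order all_algebra.
From mathcomp Require Import reals.
Set Implicit Arguments. Unset Strict Implicit. Unset Printing Implicit Defensive.
Import Order.TTheory GRing.Theory Num.Theory.
Local Open Scope ring_scope.

Definition collection_on {T : finType} (N : {set T}) (B : {set {set T}}) : bool :=
  [forall S in B, (S != set0) && (S \subset N)].

Definition balancing_weights {R : realType} {T : finType} (N : {set T})
    (B : {set {set T}}) (lam : {set T} -> R) : Prop :=
  (forall S, S \in B -> 0 < lam S) /\
  (forall x : T, \sum_(S in B) lam S * (x \in S)%:R = (x \in N)%:R).

Definition balanced (R : realType) {T : finType} (N : {set T})
    (B : {set {set T}}) : Prop :=
  collection_on N B /\ exists lam : {set T} -> R, balancing_weights N B lam.

Definition minimal_balanced (R : realType) {T : finType} (N : {set T})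
    (B : {set {set T}}) : Prop :=
  balanced R N B /\ forall B' : {set {set T}}, B' \proper B -> ~ balanced R N B'.

From HB Require Import structures.
From mathcomp Require Import all_boot all_order all_algebra.
From mathcomp Require Import reals.
Set Implicit Arguments. Unset Strict Implicit. Unset Printing Implicit Defensive.
Import Order.TTheory GRing.Theory Num.Theory.
Local Open Scope ring_scope.

(* Since p lies in no member of C, adding p to the members in D is an
   injective map extend on C which does not change membership of points
   x <> p.  Hence lam (S :\ p) balances the new collection: off p this is
   the balancing equation of C, and at p it is the hypothesis lam_D = 1.
   Conversely, balancing weights nu of a subcollection B' of the new
   collection give weights nu (extend S) on the preimage of B' in C, balanced
   on N because the equations for x <> p are unchanged; so minimality of C
   forces B' to be the whole new collection. *)

Lemma imset_preimset_sub (aT rT : finType) (f : aT -> rT)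
    (A : {set aT}) (B : {set rT}) :
  B \subset f @: A -> f @: (A :&: f @^-1: B) = B.
Proof.
move=> sBfA; apply/setP => y; apply/imsetP/idP => [[x] | yB].
  by rewrite !inE => /andP[_ fxB] ->.
case/imsetP: (subsetP sBfA y yB) => x Ax yfx.
by exists x; rewrite // !inE Ax -yfx.
Qed.

Section ExtendCollection.

Variables (T : finType) (p : T) (D : {set {set T}}).

Definition extend (S : {set T}) : {set T} :=
  if S \in D then S :|: [set p] else S.

Lemma in_extend x (S : {set T}) : x != p -> (x \in extend S) = (x \in S).
Proof. by move=> xp; rewrite /extend; case: ifP; rewrite ?inE ?(negbTE xp) ?orbF. Qed.

Lemma subset_extend (S : {set T}) : S \subset extend S.
Proof. by rewrite /extend; case: ifP; rewrite ?subsetUl. Qed.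

Lemma extend_pt (S : {set T}) : p \notin S -> (p \in extend S) = (S \in D).
Proof. by move=> pS; rewrite /extend; case: ifP; rewrite ?inE ?eqxx ?orbT ?(negbTE pS). Qed.

Lemma extendK (S : {set T}) : p \notin S -> extend S :\ p = S.
Proof.
by move=> pS; rewrite /extend; case: ifP => _; rewrite ?setDUl ?setDv ?setU0;
  apply/setDidPl; rewrite disjoint_sym disjoints1.
Qed.

Lemma extend_inj (C : {set {set T}}) :
  {in C, forall S : {set T}, p \notin S} -> {in C &, injective extend}.
Proof. by move=> pC S1 S2 /pC pS1 /pC pS2 eq12; rewrite -(extendK pS1) eq12 extendK. Qed.

Lemma imset_extend (C : {set {set T}}) :
  D \subset C -> [set S :|: [set p] | S in D] :|: (C :\: D) = extend @: C.
Proof.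
move=> sDC; apply/setP => y; rewrite !inE; apply/idP/imsetP.
  case/orP => [/imsetP[S SD ->] | /andP[yD yC]].
    by exists S; rewrite ?(subsetP sDC) // /extend SD.
  by exists y; rewrite // /extend (negbTE yD).
case=> S SC ->; rewrite /extend; case: ifP => SD; last by rewrite SD SC orbT.
by rewrite (imset_f (fun S => S :|: [set p])).
Qed.

End ExtendCollection.

Lemma collection_onP {T : finType} {N : {set T}} {B : {set {set T}}} :
  reflect {in B, forall S : {set T}, S != set0 /\ S \subset N} (collection_on N B).
Proof. by apply: (iffP forall_inP) => colB S /colB => [/andP | [-> ->]]. Qed.

Section BalancedExtension.

Variables (R : realType) (T : finType) (N : {set T}) (p : T).
Variables (C D : {set {set T}}).
Hypotheses (colC : collection_on N C) (pN : p \notin N).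

Lemma notin_collection_on (S : {set T}) : S \in C -> p \notin S.
Proof.
by move=> SC; have [_ sSN] := collection_onP colC S SC; apply: contra pN; apply: subsetP.
Qed.

Let extend_injC : {in C &, injective (extend p D)}.
Proof. exact/extend_inj/notin_collection_on. Qed.

Lemma collection_on_extend : collection_on (p |: N) (extend p D @: C).
Proof.
apply/collection_onP => _ /imsetP[S SC ->].
have [S0 sSN] := collection_onP colC S SC.
split.
  by apply: contraNneq S0 => eS0; rewrite -subset0 -eS0 subset_extend.
apply/subsetP => x; have [-> | xp] := eqVneq x p; first by rewrite setU11.
by rewrite in_extend // => /(subsetP sSN) xN; rewrite setU1r.
Qed.

Lemma balancing_weights_extend (lam : {set T} -> R) :
  D \subset C -> balancing_weights N C lam -> \sum_(S in D) lam S = 1 ->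
  balancing_weights (p |: N) (extend p D @: C) (fun S => lam (S :\ p)).
Proof.
move=> sDC [lam_gt0 lam_bal] lamD; split.
  by move=> _ /imsetP[S SC ->]; rewrite extendK ?lam_gt0 ?notin_collection_on.
move=> x; rewrite big_imset //=.
under eq_bigr => S SC do rewrite extendK ?notin_collection_on //.
have [-> | xp] := eqVneq x p.
  rewrite setU11 -[RHS]/1 -[in RHS]lamD (big_setID D) (setIidPr sDC) /=.
  rewrite [X in _ + X]big1 ?addr0.
    apply: eq_bigr => S SD; have SC := subsetP sDC S SD.
    by rewrite extend_pt ?notin_collection_on // SD mulr1.
  by move=> S /setDP[SC SD]; rewrite extend_pt ?notin_collection_on // (negbTE SD) mulr0.
by rewrite in_setU1 (negbTE xp) /= -lam_bal; apply: eq_bigr => S _; rewrite in_extend.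
Qed.

Lemma balanced_preimset_extend (B : {set {set T}}) :
  B \subset extend p D @: C -> balanced R (p |: N) B ->
  balanced R N (C :&: extend p D @^-1: B).
Proof.
move=> sBC [_ [nu [nu_gt0 nu_bal]]]; split.
  by apply/collection_onP => S /setIP[SC _]; apply: (collection_onP colC).
exists (fun S => nu (extend p D S)); split.
  by move=> S /setIP[_]; rewrite inE => /nu_gt0.
move=> x; have [-> | xp] := eqVneq x p.
  rewrite (negbTE pN) big1 // => S /setIP[SC _].
  by rewrite (negbTE (notin_collection_on SC)) mulr0.
have := nu_bal x; rewrite -[in X in X = _](imset_preimset_sub sBC) big_imset /=.
  by rewrite in_setU1 (negbTE xp) => <-; apply: eq_bigr => S _; rewrite in_extend.
by apply: sub_in2 extend_injC => S /setIP[].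
Qed.

End BalancedExtension.

Theorem lemma4p1 (R : realType) (T : finType) (N : {set T}) (p : T)
    (C : {set {set T}}) (lam : {set T} -> R) (D : {set {set T}}) :
  N != set0 -> p \notin N ->
  minimal_balanced R N C ->
  balancing_weights N C lam ->
  D \subset C ->
  \sum_(S in D) lam S = 1 ->
  minimal_balanced R (p |: N)
    ([set S :|: [set p] | S in D] :|: (C :\: D)).
Proof.
move=> _ pN [[colC _] minC] lam_bal sDC lamD; rewrite imset_extend //; split.
  split; first exact: collection_on_extend.
  by exists (fun S => lam (S :\ p)); apply: balancing_weights_extend.
move=> B ltB balB; have sBC := proper_sub ltB.
apply: (minC (C :&: extend p D @^-1: B)); last exact: balanced_preimset_extend.
rewrite properEneq subsetIl andbT; apply: contraTneq ltB => eqC.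
by rewrite -eqC (imset_preimset_sub sBC) properxx.
Qed.
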